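(* Let $u\in C([0,\infty)^2)$ be a viscosity subsolution and $v\in C([0,\infty)^2)$ a viscosity supersolution of \[ \partial_t f - 2(\partial_h f)^2 = 0 \ \text{ in } (0,\infty)^2, \qquad -\partial_h f = 0 \ \text{ on } (0,\infty)\times\{0\}, \] such that both $u$ and $v$ are uniformly Lipschitz continuous in the variable $h$. Then \[ \sup_{[0,\infty)^2}(u-v)=\sup_{\{0\}\times[0,\infty)}(u-v). \]
   Context: Viscosity solutions: $f\in C([0,\infty)^2)$ (variables $(t,h)$) is a viscosity subsolution if for every $(t,h)\in(0,\infty)\times[0,\infty)$ and $\phi\in C^\infty((0,\infty)\times[0,\infty))$ such that $f-\phi$ has a local maximum at $(t,h)$, we have $(\partial_t\phi-2(\partial_h\phi)^2)(t,h)\le0$ if $h>0$, and $\min(-\partial_h\phi,\partial_t\phi-2(\partial_h\phi)^2)(t,h)\le0$ if $h=0$. It is a viscosity supersolution if for every such $(t,h),\phi$ with $f-\phi$ having a local minimum at $(t,h)$, we have $(\partial_t\phi-2(\partial_h\phi)^2)(t,h)\ge0$ if $h>0$, and $\max(-\partial_h\phi,\partial_t\phi-2(\partial_h\phi)^2)(t,h)\ge0$ if $h=0$. ''Uniformly Lipschitz in $h$'' means there is $L<\infty$ with $|u(t,h)-u(t,h')|\le L|h-h'|$ for all $t,h,h'\ge0$. *)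

From Stdlib Require Import Reals List.
From Coquelicot Require Import Coquelicot.
Open Scope R_scope.

Definition d_t (f : R -> R -> R) : R -> R -> R :=
  fun t h => Derive (fun s => f s h) t.
Definition d_h (f : R -> R -> R) : R -> R -> R :=
  fun t h => Derive (fun k => f t k) h.

Fixpoint pderiv (ds : list bool) (f : R -> R -> R) : R -> R -> R :=
  match ds with
  | nil => f
  | b :: ds' => if b then d_t (pderiv ds' f) else d_h (pderiv ds' f)
  end.

Definition cont2_at (g : R -> R -> R) (t h : R) : Prop :=
  forall eps, 0 < eps -> exists delta, 0 < delta /\
    forall s k, Rabs (s - t) < delta -> Rabs (k - h) < delta ->
      Rabs (g s k - g t h) < eps.

Definition open2 (U : R -> R -> Prop) : Prop :=
  forall t h, U t h -> exists r, 0 < r /\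
    forall s k, Rabs (s - t) < r -> Rabs (k - h) < r -> U s k.

Definition smooth_on (U : R -> R -> Prop) (f : R -> R -> R) : Prop :=
  forall ds t h, U t h ->
    ex_derive (fun s => pderiv ds f s h) t /\
    ex_derive (fun k => pderiv ds f t k) h /\
    cont2_at (pderiv ds f) t h.

Definition Omega (t h : R) : Prop := 0 < t /\ 0 <= h.

(* phi in C^infinity((0,oo) x [0,oo)): phi is smooth on some open set
   containing (0,oo) x [0,oo) (smoothness up to the boundary h = 0). *)
Definition test_fun (phi : R -> R -> R) : Prop :=
  exists U, open2 U /\ (forall t h, Omega t h -> U t h) /\ smooth_on U phi.

Definition cont_quadrant (f : R -> R -> R) : Prop :=
  forall t h, 0 <= t -> 0 <= h ->
  forall eps, 0 < eps -> exists delta, 0 < delta /\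
    forall s k, 0 <= s -> 0 <= k -> Rabs (s - t) < delta -> Rabs (k - h) < delta ->
      Rabs (f s k - f t h) < eps.

Definition loc_max (g : R -> R -> R) (t h : R) : Prop :=
  exists r, 0 < r /\ forall s k, 0 <= s -> 0 <= k ->
    Rabs (s - t) < r -> Rabs (k - h) < r -> g s k <= g t h.
Definition loc_min (g : R -> R -> R) (t h : R) : Prop :=
  exists r, 0 < r /\ forall s k, 0 <= s -> 0 <= k ->
    Rabs (s - t) < r -> Rabs (k - h) < r -> g t h <= g s k.

Definition visc_sub (f : R -> R -> R) : Prop :=
  cont_quadrant f /\
  forall t h phi, Omega t h -> test_fun phi ->
    loc_max (fun s k => f s k - phi s k) t h ->
    (0 < h -> d_t phi t h - 2 * (d_h phi t h) ^ 2 <= 0) /\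
    (h = 0 -> Rmin (- d_h phi t h) (d_t phi t h - 2 * (d_h phi t h) ^ 2) <= 0).

Definition visc_super (f : R -> R -> R) : Prop :=
  cont_quadrant f /\
  forall t h phi, Omega t h -> test_fun phi ->
    loc_min (fun s k => f s k - phi s k) t h ->
    (0 < h -> d_t phi t h - 2 * (d_h phi t h) ^ 2 >= 0) /\
    (h = 0 -> Rmax (- d_h phi t h) (d_t phi t h - 2 * (d_h phi t h) ^ 2) >= 0).

Definition unif_lip_h (f : R -> R -> R) : Prop :=
  exists L, forall t h h', 0 <= t -> 0 <= h -> 0 <= h' ->
    Rabs (f t h - f t h') <= L * Rabs (h - h').

Definition sup_quadrant (u v : R -> R -> R) : Rbar :=
  Lub_Rbar (fun x => exists t h, 0 <= t /\ 0 <= h /\ x = u t h - v t h).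
Definition sup_initial (u v : R -> R -> R) : Rbar :=
  Lub_Rbar (fun x => exists h, 0 <= h /\ x = u 0 h - v 0 h).

(* Doubling of variables.  Suppose [u - v <= M] on [t = 0] but [u - v = M + 5 th] at some
   [(ts, hs)], [ts > 0].  Maximise [Phi t s h k = u t h - v s k - penalty t s h k] over
   [0, 2 ts]^2 x [0, oo)^2, where
     penalty = (t-s)^2/(2 eps) + (h-k)^2/(2 eps) + al (1+t)^N (2+h^2+k^2) - gam (h+k)
               + th (t/ts)^m + th (s/ts)^m;
   the maximum is at least [M + 2 th].  As [u] and [v] grow at most linearly in [h], the weight
   [al (1+t)^N (h^2+k^2)] confines the maximiser to [h, k <= K]; the barriers [th (t/ts)^m] keep it
   off [t = 2 ts]; for small [eps], continuity near [t = 0] gives a value [<= M + th] on [t = 0]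
   and on [s = 0].  The term [- gam (h+k)] rules out the Neumann alternative at [h = 0], so both
   viscosity inequalities hold in interior form at the maximiser.  Subtracting them, the
   [t]-derivative [al N (1+t)^(N-1) (2+h^2+k^2)] of the weight is bounded by the difference of the
   Hamiltonians, which the Lipschitz bound on [(h-k)/eps] controls by
   [(48 A^2 + 56 L A + 16 L gam) (2+h^2+k^2)] with [A = al (1+t)^N]: impossible for [N] large
   and [al] small. *)

From Stdlib Require Import Reals Lra Psatz.
From Coquelicot Require Import Coquelicot.
From mathcomp Require ssreflect ssrfun ssrbool order interval
  classical_sets topology normedtype derive Rstruct Rstruct_topology.
Open Scope R_scope.

(** * Maxima on compact boxes *)

Definition clamp (a b x : R) : R := Rmax a (Rmin b x).

Lemma clamp_dist a b x y : Rabs (clamp a b y - clamp a b x) <= Rabs (y - x).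
Proof.
  unfold clamp, Rmax, Rmin.
  repeat destruct Rle_dec; unfold Rabs; repeat destruct Rcase_abs; lra.
Qed.

Lemma clamp_in a b x : a <= b -> a <= clamp a b x <= b.
Proof. intros; unfold clamp, Rmax, Rmin; repeat destruct Rle_dec; lra. Qed.

Lemma clamp_id a b x : a <= x <= b -> clamp a b x = x.
Proof. intros; unfold clamp, Rmax, Rmin; repeat destruct Rle_dec; lra. Qed.

Definition in_box (T K t s h k : R) : Prop :=
  0 <= t <= T /\ 0 <= s <= T /\ 0 <= h <= K /\ 0 <= k <= K.

Definition continuous_on_box (T K : R) (F : R -> R -> R -> R -> R) : Prop :=
  forall t s h k, in_box T K t s h k -> forall eps, 0 < eps -> exists del, 0 < del /\
    forall t' s' h' k', in_box T K t' s' h' k' ->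
      Rabs (t' - t) < del -> Rabs (s' - s) < del ->
      Rabs (h' - h) < del -> Rabs (k' - k) < del ->
      Rabs (F t' s' h' k' - F t s h k) < eps.

Module BoxCompactness.
Import ssreflect ssrfun ssrbool order interval classical_sets.
Import topology normedtype derive Rstruct Rstruct_topology Order.TTheory.
Local Open Scope classical_set_scope.

Lemma continuous_of_eps_delta (G : (R * R) * (R * R) -> R) :
  (forall x (eps : R), 0 < eps -> exists del : R, 0 < del /\
     forall y, Rabs (y.1.1 - x.1.1) < del -> Rabs (y.1.2 - x.1.2) < del ->
       Rabs (y.2.1 - x.2.1) < del -> Rabs (y.2.2 - x.2.2) < del ->
       Rabs (G y - G x) < eps) ->
  continuous G.
Proof.
move=> HG x A /nbhs_ballP [e /= /RltP e0 HA].
have [d [/RltP d0 Hd]] := HG x e e0.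
apply/nbhs_ballP; exists d => // y [[/= y11 y12] [/= y21 y22]].
apply: HA; rewrite /ball /= -RabsE -Rabs_Ropp Ropp_minus_distr; apply/RltP.
move: y11 y12 y21 y22; rewrite /ball /= -!RabsE => /RltP ? /RltP ? /RltP ? /RltP ?.
by apply: Hd; rewrite -Rabs_Ropp Ropp_minus_distr.
Qed.

Lemma continuous_argmax_on_box (G : (R * R) * (R * R) -> R) (T K : R) :
  0 <= T -> 0 <= K -> continuous G ->
  exists c, in_box T K c.1.1 c.1.2 c.2.1 c.2.2 /\
    forall y, in_box T K y.1.1 y.1.2 y.2.1 y.2.2 -> G y <= G c.
Proof.
move=> /RleP T0 /RleP K0 cG.
pose A := (`[0, T] `*` `[0, T]) `*` (`[0, K] `*` `[0, K]).
have inA y : A y <-> in_box T K y.1.1 y.1.2 y.2.1 y.2.2.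
  rewrite /A /in_box /= !in_itv /=.
  by split=> [[[/andP[/RleP ? /RleP ?] /andP[/RleP ? /RleP ?]]
              [/andP[/RleP ? /RleP ?] /andP[/RleP ? /RleP ?]]]
             | [[? ?] [[? ?] [[? ?] [? ?]]]]];
     [|repeat split; apply/andP; split; apply/RleP].
have A0 : A !=set0 by exists ((0, 0), (0, 0)); rewrite /A /= !in_itv /= lexx T0 K0.
have cA : compact A by do 2 apply: compact_setX; exact: segment_compact.
have [c /set_mem Ac Hc] := compact_EVT_max A0 cA (continuous_subspaceT cG).
exists c; split; first exact/inA.
by move=> y /inA Ay; apply/RleP; apply: Hc; apply/mem_set.
Qed.

End BoxCompactness.

Lemma box_argmax (F : R -> R -> R -> R -> R) (T K : R) :
  0 <= T -> 0 <= K -> continuous_on_box T K F ->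
  exists t s h k, in_box T K t s h k /\
    forall t' s' h' k', in_box T K t' s' h' k' -> F t' s' h' k' <= F t s h k.
Proof.
  intros HT HK HF.
  (* clamping makes [G] continuous on all of R^4 while it agrees with [F] on the box *)
  set (G := fun y : (R * R) * (R * R) =>
    F (clamp 0 T (fst (fst y))) (clamp 0 T (snd (fst y)))
      (clamp 0 K (fst (snd y))) (clamp 0 K (snd (snd y)))).
  destruct (BoxCompactness.continuous_argmax_on_box G T K HT HK) as [[[t s] [h k]] [Hc Hmax]].
  - apply BoxCompactness.continuous_of_eps_delta.
    intros [[t s] [h k]] eps Heps; simpl.
    destruct (HF (clamp 0 T t) (clamp 0 T s) (clamp 0 K h) (clamp 0 K k))
      with eps as [del [Hdel Hclose]];
      [repeat split; apply clamp_in; lra | lra |].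
    exists del; split; [lra |]; intros [[t' s'] [h' k']]; simpl; intros.
    apply Hclose; [repeat split; apply clamp_in; lra | ..];
      eapply Rle_lt_trans; try apply clamp_dist; assumption.
  - exists t, s, h, k; split; [exact Hc |].
    intros t' s' h' k' Hin.
    specialize (Hmax ((t', s'), (h', k')) Hin); unfold G in Hmax; simpl in *.
    destruct Hin as (? & ? & ? & ?), Hc as (? & ? & ? & ?).
    rewrite !clamp_id in Hmax by lra; exact Hmax.
Qed.

Lemma segment_abs_bound (f : R -> R) (T : R) : 0 <= T ->
  (forall t, 0 <= t <= T -> forall eps, 0 < eps -> exists del, 0 < del /\
     forall t', 0 <= t' <= T -> Rabs (t' - t) < del -> Rabs (f t' - f t) < eps) ->
  exists C, forall t, 0 <= t <= T -> Rabs (f t) <= C.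
Proof.
  intros HT Hf.
  set (g := fun t => f (clamp 0 T t)).
  assert (Hg : forall c, 0 <= c <= T -> continuity_pt g c).
  { intros c Hc eps Heps.
    destruct (Hf c Hc eps Heps) as [del [Hdel Hclose]].
    exists del; split; [lra |]; intros t [_ Ht]; simpl in *; unfold R_dist in *.
    unfold g; rewrite (clamp_id 0 T c) by lra.
    apply Hclose; [apply clamp_in; lra |].
    pose proof (clamp_dist 0 T c t) as Hdist.
    rewrite (clamp_id 0 T c) in Hdist by lra; lra. }
  destruct (continuity_ab_maj g 0 T HT Hg) as [tmax [Hmax Htmax]].
  destruct (continuity_ab_min g 0 T HT Hg) as [tmin [Hmin Htmin]].
  exists (Rmax (Rabs (f tmax)) (Rabs (f tmin))); intros t Ht.
  specialize (Hmax t Ht); specialize (Hmin t Ht); unfold g in Hmax, Hmin.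
  rewrite !clamp_id in Hmax, Hmin by lra.
  pose proof (Rmax_l (Rabs (f tmax)) (Rabs (f tmin))).
  pose proof (Rmax_r (Rabs (f tmax)) (Rabs (f tmin))).
  pose proof (Rle_abs (f tmax)); pose proof (Rle_abs (- f tmin)).
  rewrite Rabs_Ropp in *; apply Rabs_le_between; lra.
Qed.

Definition continuous4 (P : R -> R -> R -> R -> R) : Prop :=
  forall t s h k, continuous (fun p : (R * R) * (R * R) =>
    P (fst (fst p)) (snd (fst p)) (fst (snd p)) (snd (snd p))) ((t, s), (h, k)).

Lemma continuous_pow {U : UniformSpace} (f : U -> R) (n : nat) x :
  continuous f x -> continuous (fun p => f p ^ n) x.
Proof.
  intros Hf; induction n as [| n IH]; simpl.
  - apply continuous_const.
  - exact (continuous_mult f (fun p => f p ^ n) x Hf IH).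
Qed.

Ltac solve_continuous :=
  repeat match goal with
  | |- continuous (fun p => @?f p + @?g p) _ => apply (continuous_plus f g)
  | |- continuous (fun p => @?f p - @?g p) _ => apply (continuous_minus f g)
  | |- continuous (fun p => @?f p * @?g p) _ => apply (continuous_mult f g)
  | |- continuous (fun p => @?f p / ?c) _ => apply (continuous_mult f (fun _ => / c))
  | |- continuous (fun p => @?f p ^ ?n) _ => apply (continuous_pow f n)
  | |- continuous (fun p => fst (fst p)) _ =>
      apply (continuous_comp fst fst); apply continuous_fst
  | |- continuous (fun p => snd (fst p)) _ =>
      apply (continuous_comp fst snd); [apply continuous_fst | apply continuous_snd]
  | |- continuous (fun p => fst (snd p)) _ =>
      apply (continuous_comp snd fst); [apply continuous_snd | apply continuous_fst]
  | |- continuous (fun p => snd (snd p)) _ =>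
      apply (continuous_comp snd snd); apply continuous_snd
  | |- continuous (fun _ => _) _ => apply continuous_const
  end.

Lemma doubled_continuous_on_box u v P T K :
  cont_quadrant u -> cont_quadrant v -> continuous4 P ->
  continuous_on_box T K (fun t s h k => u t h - v s k - P t s h k).
Proof.
  intros Hu Hv HP t s h k (Ht & Hs & Hh & Hk) eps Heps.
  destruct (Hu t h ltac:(lra) ltac:(lra) (eps / 3)) as [d1 [Hd1 Hu']]; [lra |].
  destruct (Hv s k ltac:(lra) ltac:(lra) (eps / 3)) as [d2 [Hd2 Hv']]; [lra |].
  destruct (HP t s h k (ball (P t s h k) (mkposreal (eps / 3) ltac:(lra))))
    as [d3 HP']; [apply locally_ball |].
  exists (Rmin d1 (Rmin d2 d3)); split.
  { apply Rmin_pos; [| apply Rmin_pos]; auto; apply cond_pos. }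
  intros t' s' h' k' (Ht' & Hs' & Hh' & Hk') H1 H2 H3 H4.
  pose proof (Rmin_l d1 (Rmin d2 d3)); pose proof (Rmin_r d1 (Rmin d2 d3)).
  pose proof (Rmin_l d2 d3); pose proof (Rmin_r d2 d3).
  assert (Eu := Hu' t' h' ltac:(lra) ltac:(lra) ltac:(lra) ltac:(lra)).
  assert (Ev := Hv' s' k' ltac:(lra) ltac:(lra) ltac:(lra) ltac:(lra)).
  assert (EP : Rabs (P t' s' h' k' - P t s h k) < eps / 3).
  { apply (HP' ((t', s'), (h', k'))).
    assert (Rabs (t' - t) < d3) by lra; assert (Rabs (s' - s) < d3) by lra.
    assert (Rabs (h' - h) < d3) by lra; assert (Rabs (k' - k) < d3) by lra.
    split; split; assumption. }
  apply Rabs_lt_between in Eu, Ev, EP; apply Rabs_def1; lra.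
Qed.

(** * Polynomial test functions *)

Inductive poly2 : (R -> R -> R) -> Prop :=
| poly2_const c : poly2 (fun _ _ => c)
| poly2_t : poly2 (fun t _ => t)
| poly2_h : poly2 (fun _ h => h)
| poly2_add f g : poly2 f -> poly2 g -> poly2 (fun t h => f t h + g t h)
| poly2_mul f g : poly2 f -> poly2 g -> poly2 (fun t h => f t h * g t h)
| poly2_ext f g : poly2 f -> (forall t h, f t h = g t h) -> poly2 g.

Lemma poly2_swap f : poly2 f -> poly2 (fun t h => f h t).
Proof.
  induction 1.
  - apply poly2_const.
  - apply poly2_h.
  - apply poly2_t.
  - exact (poly2_add _ _ IHpoly2_1 IHpoly2_2).
  - exact (poly2_mul _ _ IHpoly2_1 IHpoly2_2).
  - apply (poly2_ext _ _ IHpoly2); auto.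
Qed.

Lemma poly2_ex_derive_t f : poly2 f -> forall t h, ex_derive (fun s => f s h) t.
Proof.
  induction 1; intros t h.
  - apply ex_derive_const.
  - apply ex_derive_id.
  - apply ex_derive_const.
  - exact (ex_derive_plus (fun s => f s h) (fun s => g s h) t (IHpoly2_1 t h) (IHpoly2_2 t h)).
  - exact (ex_derive_mult (fun s => f s h) (fun s => g s h) t (IHpoly2_1 t h) (IHpoly2_2 t h)).
  - apply (ex_derive_ext (fun s => f s h)); auto.
Qed.

Lemma poly2_ex_derive_h f : poly2 f -> forall t h, ex_derive (fun k => f t k) h.
Proof. intros Hf t h; exact (poly2_ex_derive_t _ (poly2_swap f Hf) h t). Qed.

Lemma poly2_d_t f : poly2 f -> poly2 (d_t f).
Proof.
  unfold d_t; induction 1.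
  - apply (poly2_ext (fun _ _ => 0)); [apply poly2_const |].
    intros; symmetry; apply Derive_const.
  - apply (poly2_ext (fun _ _ => 1)); [apply poly2_const |].
    intros; symmetry; apply Derive_id.
  - apply (poly2_ext (fun _ _ => 0)); [apply poly2_const |].
    intros; symmetry; apply Derive_const.
  - apply (poly2_ext _ _ (poly2_add _ _ IHpoly2_1 IHpoly2_2)).
    intros t h; symmetry.
    apply (Derive_plus (fun s => f s h) (fun s => g s h)); apply poly2_ex_derive_t; auto.
  - apply (poly2_ext _ _ (poly2_add _ _ (poly2_mul _ _ IHpoly2_1 H0) (poly2_mul _ _ H IHpoly2_2))).
    intros t h; symmetry.
    apply (Derive_mult (fun s => f s h) (fun s => g s h)); apply poly2_ex_derive_t; auto.
  - apply (poly2_ext _ _ IHpoly2).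
    intros t h; apply Derive_ext; auto.
Qed.

Lemma poly2_d_h f : poly2 f -> poly2 (d_h f).
Proof.
  intros Hf.
  (* [d_h f] is convertible to the swap of [d_t] of the swap of [f] *)
  exact (poly2_swap _ (poly2_d_t _ (poly2_swap f Hf))).
Qed.

Lemma poly2_pderiv f ds : poly2 f -> poly2 (pderiv ds f).
Proof.
  intros Hf; induction ds as [| [|] ds IH]; simpl; auto.
  - apply poly2_d_t; auto.
  - apply poly2_d_h; auto.
Qed.

Lemma poly2_continuous f : poly2 f -> forall t h,
  continuous (fun p : R * R => f (fst p) (snd p)) (t, h).
Proof.
  induction 1; intros t h.
  - apply continuous_const.
  - apply continuous_fst.
  - apply continuous_snd.
  - exact (continuous_plus (fun p : R * R => f (fst p) (snd p))
             (fun p : R * R => g (fst p) (snd p)) _ (IHpoly2_1 t h) (IHpoly2_2 t h)).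
  - exact (continuous_mult (fun p : R * R => f (fst p) (snd p))
             (fun p : R * R => g (fst p) (snd p)) _ (IHpoly2_1 t h) (IHpoly2_2 t h)).
  - apply (continuous_ext (fun p : R * R => f (fst p) (snd p))); auto.
Qed.

Lemma poly2_cont2_at f t h : poly2 f -> cont2_at f t h.
Proof.
  intros Hf eps Heps.
  destruct (poly2_continuous f Hf t h (ball (f t h) (mkposreal eps Heps)))
    as [del Hdel]; [apply locally_ball |].
  exists del; split; [apply cond_pos |].
  intros s k Hs Hk; apply (Hdel (s, k)); split; assumption.
Qed.

Lemma poly2_test_fun f : poly2 f -> test_fun f.
Proof.
  intros Hf; exists (fun _ _ => True); split; [| split; [auto |]].
  - intros t h _; exists 1; split; [lra | auto].
  - intros ds t h _; pose proof (poly2_pderiv f ds Hf) as Hd.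
    split; [| split]; [apply poly2_ex_derive_t | apply poly2_ex_derive_h | apply poly2_cont2_at];
      exact Hd.
Qed.

Lemma poly2_scale c f : poly2 f -> poly2 (fun t h => c * f t h).
Proof. intros; apply (poly2_mul (fun _ _ => c)); [apply poly2_const | auto]. Qed.

Lemma poly2_opp f : poly2 f -> poly2 (fun t h => - f t h).
Proof.
  intros Hf; apply (poly2_ext _ _ (poly2_scale (-1) f Hf)); intros; ring.
Qed.

Lemma poly2_sub f g : poly2 f -> poly2 g -> poly2 (fun t h => f t h - g t h).
Proof. intros Hf Hg; exact (poly2_add _ _ Hf (poly2_opp g Hg)). Qed.

Lemma poly2_div f c : poly2 f -> poly2 (fun t h => f t h / c).
Proof.
  intros Hf; apply (poly2_ext _ _ (poly2_scale (/ c) f Hf)); intros; unfold Rdiv; ring.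
Qed.

Lemma poly2_pow f n : poly2 f -> poly2 (fun t h => f t h ^ n).
Proof.
  intros Hf; induction n as [| n IH]; simpl.
  - apply poly2_const.
  - exact (poly2_mul f (fun t h => f t h ^ n) Hf IH).
Qed.

Ltac solve_poly2 :=
  repeat match goal with
  | |- poly2 (fun t h => @?f t h + @?g t h) => apply (poly2_add f g)
  | |- poly2 (fun t h => @?f t h - @?g t h) => apply (poly2_sub f g)
  | |- poly2 (fun t h => @?f t h * @?g t h) => apply (poly2_mul f g)
  | |- poly2 (fun t h => @?f t h / ?c) => apply (poly2_div f c)
  | |- poly2 (fun t h => - @?f t h) => apply (poly2_opp f)
  | |- poly2 (fun t h => @?f t h ^ ?n) => apply (poly2_pow f n)
  | |- poly2 (fun t h => t) => apply poly2_t
  | |- poly2 (fun t h => h) => apply poly2_h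
  | |- poly2 (fun t h => ?c) => apply (poly2_const c)
  end.

(** * Lipschitz functions near the initial time *)

Definition lip_h (f : R -> R -> R) (L : R) : Prop :=
  forall t h h', 0 <= t -> 0 <= h -> 0 <= h' ->
    Rabs (f t h - f t h') <= L * Rabs (h - h').

Lemma lip_h_le f L L' : lip_h f L -> L <= L' -> lip_h f L'.
Proof.
  intros Hf HL t h h' Ht Hh Hh'; eapply Rle_trans; [apply Hf; auto |].
  apply Rmult_le_compat_r; [apply Rabs_pos | exact HL].
Qed.

Lemma near_initial_steps f L th eta :
  cont_quadrant f -> lip_h f L -> 0 <= L -> 0 < th -> 0 < eta -> L * eta <= th / 4 ->
  forall n : nat, exists del, 0 < del /\
    forall s k, 0 <= s < del -> 0 <= k <= INR n * eta -> Rabs (f s k - f 0 k) < th.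
Proof.
  intros Hc Hl HL Hth Heta HLeta n.
  (* on the new step [k0, k0 + eta], compare with the point (s, k0) via continuity at (0, k0) *)
  induction n as [| n [d1 [Hd1 IH]]].
  - destruct (Hc 0 0 (Rle_refl 0) (Rle_refl 0) th Hth) as [del [Hdel Hclose]].
    exists del; split; auto; intros s k Hs Hk; simpl in Hk.
    replace k with 0 by lra; apply Hclose; try lra; rewrite Rabs_right; lra.
  - set (k0 := INR n * eta) in *.
    assert (Hk0 : 0 <= k0) by (apply Rmult_le_pos; [apply pos_INR | lra]).
    destruct (Hc 0 k0 (Rle_refl 0) Hk0 (th / 2)) as [d2 [Hd2 Hclose]]; [lra |].
    exists (Rmin d1 d2); split; [apply Rmin_pos; auto |].
    intros s k Hs Hk.
    pose proof (Rmin_l d1 d2); pose proof (Rmin_r d1 d2).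
    destruct (Rle_lt_dec k k0) as [Hle | Hgt]; [apply IH; split; lra |].
    assert (Hk' : k <= k0 + eta) by (rewrite S_INR in Hk; unfold k0; lra).
    assert (Hmid : Rabs (f s k0 - f 0 k0) < th / 2).
    { apply Hclose; try lra; [rewrite Rminus_0_r, Rabs_right | rewrite Rminus_diag, Rabs_R0];
        lra. }
    assert (Hkk0 : L * Rabs (k - k0) <= th / 4).
    { rewrite Rabs_right by lra.
      apply Rle_trans with (L * eta); [apply Rmult_le_compat_l; lra | exact HLeta]. }
    pose proof (Hl s k k0 ltac:(lra) ltac:(lra) Hk0) as Hlip_s.
    pose proof (Hl 0 k k0 (Rle_refl 0) ltac:(lra) Hk0) as Hlip_0.
    apply Rabs_le_between in Hlip_s, Hlip_0; apply Rabs_lt_between in Hmid.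
    apply Rabs_def1; lra.
Qed.

Lemma near_initial_uniform f L K th :
  cont_quadrant f -> lip_h f L -> 0 <= L -> 0 < th ->
  exists del, 0 < del /\
    forall s k, 0 <= s < del -> 0 <= k <= K -> Rabs (f s k - f 0 k) < th.
Proof.
  intros Hc Hl HL Hth.
  set (eta := th / (4 * (L + 1))).
  assert (Heta : 0 < eta) by (unfold eta; apply Rdiv_lt_0_compat; lra).
  assert (HLeta : L * eta <= th / 4).
  { unfold eta; apply (Rmult_le_reg_r (4 * (L + 1))); [lra |].
    field_simplify; [nra | lra]. }
  destruct (INR_unbounded (K / eta)) as [n Hn].
  destruct (near_initial_steps f L th eta Hc Hl HL Hth Heta HLeta n) as [del [Hdel Hclose]].
  exists del; split; auto; intros s k Hs Hk; apply Hclose; auto.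
  split; [lra |].
  apply Rle_trans with K; [lra |].
  replace K with (K / eta * eta) at 1 by (field; lra).
  apply Rmult_le_compat_r; lra.
Qed.

Lemma at_right0_pos : at_right 0 (fun x => 0 < x).
Proof. exists (mkposreal 1 Rlt_0_1); auto. Qed.

Lemma at_right0_mul_lt a b : 0 < b -> at_right 0 (fun x => x * a < b).
Proof.
  intros Hb.
  assert (Hd : 0 < b / (Rabs a + 1)) by (apply Rdiv_lt_0_compat; [| pose proof (Rabs_pos a)]; lra).
  exists (mkposreal _ Hd); intros x Hx Hpos; simpl in *.
  change (Rabs (x - 0) < b / (Rabs a + 1)) in Hx.
  rewrite Rminus_0_r, Rabs_right in Hx by lra.
  apply Rle_lt_trans with (x * Rabs a); [apply Rmult_le_compat_l; [lra | apply Rle_abs] |].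
  apply Rmult_lt_compat_r with (r := Rabs a + 1) in Hx; [| pose proof (Rabs_pos a); lra].
  replace (b / (Rabs a + 1) * (Rabs a + 1)) with b in Hx by (field; pose proof (Rabs_pos a); lra).
  nra.
Qed.

Lemma at_right0_le_div a c : 0 < a -> at_right 0 (fun x => c <= a / x).
Proof.
  intros Ha.
  assert (Hd : 0 < a / (Rabs c + 1)) by (apply Rdiv_lt_0_compat; [| pose proof (Rabs_pos c)]; lra).
  exists (mkposreal _ Hd); intros x Hx Hpos; simpl in *.
  change (Rabs (x - 0) < a / (Rabs c + 1)) in Hx.
  rewrite Rminus_0_r, Rabs_right in Hx by lra.
  apply Rle_trans with (Rabs c + 1); [pose proof (Rle_abs c); lra |].
  apply Rmult_le_reg_r with x; [lra |].
  replace (a / x * x) with a by (field; lra).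
  apply Rmult_lt_compat_l with (r := Rabs c + 1) in Hx; [| pose proof (Rabs_pos c); lra].
  replace ((Rabs c + 1) * (a / (Rabs c + 1))) with a in Hx by (field; pose proof (Rabs_pos c); lra).
  lra.
Qed.

Lemma boundary_slice_bound f T : cont_quadrant f -> 0 <= T ->
  exists C, forall t, 0 <= t <= T -> Rabs (f t 0) <= C.
Proof.
  intros Hc HT; apply (segment_abs_bound (fun t => f t 0) T HT).
  intros t Ht eps Heps.
  destruct (Hc t 0 ltac:(lra) (Rle_refl 0) eps Heps) as [d [Hd Hclose]].
  exists d; split; auto; intros t' Ht' Hdist.
  apply Hclose; try lra; rewrite Rminus_diag, Rabs_R0; lra.
Qed.

Lemma initial_layer f L T K th :
  cont_quadrant f -> lip_h f L -> 0 <= L -> 0 <= T -> 0 <= K -> 0 < th ->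
  at_right 0 (fun eps => forall s k, 0 <= s <= T -> 0 <= k <= K ->
    Rabs (f s k - f 0 k) <= th + s ^ 2 / (2 * eps)).
Proof.
  intros Hc Hl HL HT HK Hth.
  destruct (near_initial_uniform f L K th Hc Hl HL Hth) as [del [Hdel Hnear]].
  destruct (boundary_slice_bound f T Hc HT) as [C HC].
  (* far from t = 0 the difference is bounded, and s^2 / (2 eps) beats that bound *)
  apply (filter_imp (fun eps => 0 < eps /\ 2 * L * K + 2 * C <= (del ^ 2 / 2) / eps)).
  - intros eps [Heps Hbig] s k Hs Hk.
    destruct (Rlt_le_dec s del) as [Hsmall | Hlarge].
    + pose proof (Hnear s k ltac:(lra) Hk).
      assert (0 <= s ^ 2 / (2 * eps)) by (apply Rdiv_le_0_compat; [apply pow2_ge_0 | lra]).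
      lra.
    + assert (Hs2 : (del ^ 2 / 2) / eps <= s ^ 2 / (2 * eps)).
      { replace ((del ^ 2 / 2) / eps) with (del ^ 2 / (2 * eps)) by (field; lra).
        apply Rmult_le_compat_r; [left; apply Rinv_0_lt_compat; lra |].
        apply pow_incr; lra. }
      pose proof (Hl s k 0 ltac:(lra) ltac:(lra) (Rle_refl 0)) as Hlip_s.
      pose proof (Hl 0 k 0 (Rle_refl 0) ltac:(lra) (Rle_refl 0)) as Hlip_0.
      rewrite Rminus_0_r, (Rabs_right k) in Hlip_s, Hlip_0 by lra.
      pose proof (HC s Hs) as HCs; pose proof (HC 0 ltac:(lra)) as HC0.
      assert (L * k <= L * K) by (apply Rmult_le_compat_l; lra).
      apply Rabs_le_between in Hlip_s, Hlip_0, HCs, HC0; apply Rabs_le_between; lra.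
  - apply filter_and; [apply at_right0_pos | apply at_right0_le_div].
    apply Rdiv_lt_0_compat; [apply pow_lt |]; lra.
Qed.

(** * Estimates at a maximum of the doubled function *)

Lemma visc_sub_ineq f t h phi :
  visc_sub f -> Omega t h -> test_fun phi ->
  loc_max (fun s k => f s k - phi s k) t h ->
  (h = 0 -> 0 < - d_h phi t h) ->
  d_t phi t h - 2 * (d_h phi t h) ^ 2 <= 0.
Proof.
  intros [_ Hf] Hth Hphi Hmax Hslope.
  destruct (Hf t h phi Hth Hphi Hmax) as [Hint Hbdry].
  destruct (Rlt_le_dec 0 h) as [Hpos | Hnpos]; [exact (Hint Hpos) |].
  assert (Hzero : h = 0) by (destruct Hth; lra).
  specialize (Hbdry Hzero); specialize (Hslope Hzero).
  unfold Rmin in Hbdry; destruct Rle_dec in Hbdry; lra.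
Qed.

Lemma visc_super_ineq f t h phi :
  visc_super f -> Omega t h -> test_fun phi ->
  loc_min (fun s k => f s k - phi s k) t h ->
  (h = 0 -> - d_h phi t h < 0) ->
  d_t phi t h - 2 * (d_h phi t h) ^ 2 >= 0.
Proof.
  intros [_ Hf] Hth Hphi Hmin Hslope.
  destruct (Hf t h phi Hth Hphi Hmin) as [Hint Hbdry].
  destruct (Rlt_le_dec 0 h) as [Hpos | Hnpos]; [exact (Hint Hpos) |].
  assert (Hzero : h = 0) by (destruct Hth; lra).
  specialize (Hbdry Hzero); specialize (Hslope Hzero).
  unfold Rmax in Hbdry; destruct Rle_dec in Hbdry; lra.
Qed.

Lemma penalized_slope_bound D eps c L :
  0 < eps -> 0 <= L -> D ^ 2 / (2 * eps) + c * D <= L * Rabs D ->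
  Rabs (D / eps) <= 2 * (L + Rabs c).
Proof.
  intros Heps HL HD.
  rewrite Rabs_div, (Rabs_right eps) by lra.
  assert (Hc : - (c * D) <= Rabs c * Rabs D)
    by (rewrite <- Rabs_mult; rewrite <- Rabs_Ropp; apply Rle_abs).
  assert (HD2 : D ^ 2 = Rabs D ^ 2) by (rewrite <- Rsqr_pow2, Rsqr_abs, Rsqr_pow2; reflexivity).
  pose proof (Rabs_pos D); pose proof (Rabs_pos c).
  destruct (Req_dec (Rabs D) 0) as [Hz | Hnz].
  { rewrite Hz; unfold Rdiv; rewrite Rmult_0_l; lra. }
  assert (Hsq : Rabs D * Rabs D / (2 * eps) <= (L + Rabs c) * Rabs D)
    by (rewrite HD2 in HD; simpl in HD; nra).
  apply Rmult_le_reg_r with (Rabs D); [lra |].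
  apply Rmult_le_reg_r with (/ 2); [lra |].
  replace (Rabs D / eps * Rabs D * / 2) with (Rabs D * Rabs D / (2 * eps)) by (field; lra).
  lra.
Qed.

Lemma hamiltonian_gap_factor A L gam p h k :
  0 <= h -> 0 <= k -> 0 <= A -> 0 <= gam ->
  Rabs p <= 2 * (L + Rabs (A * (h + k) - gam)) ->
  2 * (p + 2 * A * h - gam) ^ 2 - 2 * (p - 2 * A * k + gam) ^ 2
    <= 8 * ((A * (h + k) + gam) * (2 * L + 2 * gam + 3 * (A * (h + k)))).
Proof.
  intros Hh Hk HA Hgam Hp.
  set (S := h + k) in *.
  replace (2 * (p + 2 * A * h - gam) ^ 2 - 2 * (p - 2 * A * k + gam) ^ 2)
    with (8 * ((A * S - gam) * (p + A * (h - k)))) by (unfold S; ring).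
  apply Rmult_le_compat_l; [lra |].
  assert (HAS : 0 <= A * S) by (unfold S; nra).
  assert (Hc : Rabs (A * S - gam) <= A * S + gam) by (apply Rabs_le; lra).
  assert (HAD : Rabs (A * (h - k)) <= A * S)
    by (rewrite Rabs_mult, (Rabs_right A) by lra;
        apply Rmult_le_compat_l; [lra | apply Rabs_le; unfold S; lra]).
  assert (Hsum : Rabs (p + A * (h - k)) <= 2 * L + 2 * gam + 3 * (A * S))
    by (eapply Rle_trans; [apply Rabs_triang | lra]).
  eapply Rle_trans; [apply Rle_abs |]; rewrite Rabs_mult.
  apply Rmult_le_compat; try apply Rabs_pos; assumption.
Qed.

Lemma hamiltonian_gap_bound A L gam p h k :
  0 <= h -> 0 <= k -> 0 <= A -> 0 <= gam <= L ->
  Rabs p <= 2 * (L + Rabs (A * (h + k) - gam)) ->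
  2 * (p + 2 * A * h - gam) ^ 2 - 2 * (p - 2 * A * k + gam) ^ 2
    <= (48 * A ^ 2 + 56 * L * A + 16 * L * gam) * (2 + h ^ 2 + k ^ 2).
Proof.
  intros Hh Hk HA Hgam Hp.
  pose proof (hamiltonian_gap_factor A L gam p h k Hh Hk HA ltac:(lra) Hp) as Hgap.
  set (S := h + k) in *; set (Q := 2 + h ^ 2 + k ^ 2).
  assert (HAS : 0 <= A * S) by (unfold S; nra).
  assert (HS2 : (A * S) ^ 2 <= 2 * A ^ 2 * Q).
  { unfold S, Q.
    replace ((A * (h + k)) ^ 2) with (A ^ 2 * (h + k) ^ 2) by ring.
    replace (2 * A ^ 2 * (2 + h ^ 2 + k ^ 2)) with (A ^ 2 * (2 * (2 + h ^ 2 + k ^ 2))) by ring.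
    apply Rmult_le_compat_l; [apply pow2_ge_0 |].
    pose proof (pow2_ge_0 (h - k)); nra. }
  assert (HSQ : A * S <= A * Q).
  { unfold S, Q; apply Rmult_le_compat_l; [lra |].
    pose proof (pow2_ge_0 (h - 1)); pose proof (pow2_ge_0 (k - 1)); nra. }
  assert (HQ : 2 <= Q) by (unfold Q; pose proof (pow2_ge_0 h); pose proof (pow2_ge_0 k); lra).
  assert (gam * (A * S) <= L * (A * S)) by (apply Rmult_le_compat_r; lra).
  assert (gam * gam <= L * gam) by (apply Rmult_le_compat_r; lra).
  assert (L * (A * S) <= L * (A * Q)) by (apply Rmult_le_compat_l; lra).
  assert (L * gam * 2 <= L * gam * Q) by (apply Rmult_le_compat_l; nra).
  replace ((A * S + gam) * (2 * L + 2 * gam + 3 * (A * S)))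
    with (3 * (A * S) ^ 2 + 2 * (L * (A * S)) + 5 * (gam * (A * S))
          + 2 * (L * gam) + 2 * (gam * gam))
    in Hgap by ring.
  replace ((48 * A ^ 2 + 56 * L * A + 16 * L * gam) * Q)
    with (24 * (2 * A ^ 2 * Q) + 56 * (L * (A * Q)) + 8 * (L * gam * 2 * Q)) by ring.
  nra.
Qed.

Lemma time_weight_dominates L X al gam x N :
  0 < L -> 1 <= x <= X -> 0 < al ->
  112 * L * X <= INR N -> al * X ^ S N <= INR N / 192 -> 16 * L * gam < al * INR N / 4 ->
  48 * (al * x ^ N) ^ 2 + 56 * L * (al * x ^ N) + 16 * L * gam < al * (INR N * x ^ pred N).
Proof.
  intros HL Hx Hal HN1 HN2 Hgam.
  destruct N as [| n]; [simpl in HN1; nra |]; simpl pred.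
  set (y := x ^ n); assert (Hy : 1 <= y) by (apply pow_R1_Rle; lra).
  replace (x ^ S n) with (x * y) by reflexivity.
  assert (HNpos : 0 < INR (S n)) by (rewrite S_INR; pose proof (pos_INR n); lra).
  assert (Hxn : x * (x * y) <= X ^ S (S n)) by (apply pow_incr with (n := S (S n)); lra).
  assert (H56 : 56 * L * (al * (x * y)) <= al * y * INR (S n) / 2).
  { assert (112 * L * x <= INR (S n)) by nra.
    assert (0 <= al * y) by nra. nra. }
  assert (H48 : 48 * (al * (x * y)) ^ 2 <= al * y * INR (S n) / 4).
  { assert (al * (x * (x * y)) <= INR (S n) / 192) by nra.
    assert (0 <= al * y) by nra.
    replace (48 * (al * (x * y)) ^ 2) with (48 * (al * y) * (al * (x * (x * y)))) by ring.
    nra. }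
  nra.
Qed.

Lemma young_abs L D eps : 0 < eps -> L * Rabs D - D ^ 2 / (2 * eps) <= L ^ 2 * eps / 2.
Proof.
  intros Heps.
  assert (HD : D ^ 2 = Rabs D ^ 2) by (rewrite <- Rsqr_pow2, Rsqr_abs, Rsqr_pow2; reflexivity).
  rewrite HD.
  assert (0 <= (Rabs D - L * eps) ^ 2 / (2 * eps))
    by (apply Rdiv_le_0_compat; [apply pow2_ge_0 | lra]).
  replace (L * Rabs D - Rabs D ^ 2 / (2 * eps))
    with (L ^ 2 * eps / 2 - (Rabs D - L * eps) ^ 2 / (2 * eps)) by (field; lra).
  lra.
Qed.

(** * Doubling of variables *)

Section Doubling.

Variables (u v : R -> R -> R) (L M ts hs th : R).
Hypothesis Hsub : visc_sub u.
Hypothesis Hsup : visc_super v.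
Hypothesis HLu : lip_h u L.
Hypothesis HLv : lip_h v L.
Hypothesis HL : 1 <= L.
Hypothesis Hinit : forall h, 0 <= h -> u 0 h - v 0 h <= M.
Hypothesis Hts : 0 < ts.
Hypothesis Hhs : 0 <= hs.
Hypothesis Hth : 0 < th.
Hypothesis Hexcess : u ts hs - v ts hs = M + 5 * th.

Variables (N m : nat) (al gam eps K Cu Cv : R).

Let T := 2 * ts.
Let W := (L + 1) ^ 2 / (4 * al).

Hypothesis HN : 112 * L * (1 + T) <= INR N.
Hypothesis Hal : 0 < al.
Hypothesis Hal_growth : al * (1 + T) ^ S N <= INR N / 192.
Hypothesis Hal_ref : al * (1 + ts) ^ N * (2 + 2 * hs ^ 2) <= th.
Hypothesis HCu : forall t, 0 <= t <= T -> u t 0 <= Cu.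
Hypothesis HCv : forall t, 0 <= t <= T -> Cv <= v t 0.
Hypothesis HK1 : 1 <= K.
Hypothesis HKhs : hs <= K.
Hypothesis HK : L + 1 + Rabs (Cu - Cv + W - M) <= al * K.
Hypothesis Hm : Cu - Cv + 2 * W - th * 2 ^ m < M + 2 * th.
Hypothesis Hgam : 0 < gam <= 1.
Hypothesis Hgam_growth : 16 * L * gam < al * INR N / 4.
Hypothesis Hgam_K : 2 * gam * K <= th / 2.
Hypothesis Heps : 0 < eps.
Hypothesis Heps_L : L ^ 2 * eps / 2 <= th / 4.
Hypothesis Hlayer_u : forall s k, 0 <= s <= T -> 0 <= k <= K ->
  Rabs (u s k - u 0 k) <= th / 4 + s ^ 2 / (2 * eps).
Hypothesis Hlayer_v : forall s k, 0 <= s <= T -> 0 <= k <= K ->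
  Rabs (v s k - v 0 k) <= th / 4 + s ^ 2 / (2 * eps).

Definition barrier (t : R) : R := th * (t / ts) ^ m.

Definition penalty (t s h k : R) : R :=
  (t - s) ^ 2 / (2 * eps) + (h - k) ^ 2 / (2 * eps)
  + al * (1 + t) ^ N * (2 + h ^ 2 + k ^ 2) - gam * (h + k) + barrier t + barrier s.

Definition Phi (t s h k : R) : R := u t h - v s k - penalty t s h k.

Definition barrier_slope (t : R) : R := th * (INR m * (t / ts) ^ pred m / ts).

Lemma barrier_nonneg t : 0 <= t -> 0 <= barrier t.
Proof.
  intros; unfold barrier; apply Rmult_le_pos; [lra |].
  apply pow_le, Rdiv_le_0_compat; lra.
Qed.

Lemma barrier_slope_nonneg t : 0 <= t -> 0 <= barrier_slope t.
Proof.
  intros; unfold barrier_slope; apply Rmult_le_pos; [lra |].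
  apply Rdiv_le_0_compat; [| lra].
  apply Rmult_le_pos; [apply pos_INR | apply pow_le, Rdiv_le_0_compat; lra].
Qed.

Lemma penalty_continuous : continuous4 penalty.
Proof. intros t s h k; unfold penalty, barrier; solve_continuous. Qed.

Lemma penalty_poly2_u s0 k0 : poly2 (fun t h => penalty t s0 h k0).
Proof. unfold penalty, barrier; solve_poly2. Qed.

Lemma penalty_poly2_v t0 h0 : poly2 (fun s k => - penalty t0 s h0 k).
Proof. unfold penalty, barrier; solve_poly2. Qed.

Lemma penalty_d_t_u s0 k0 t0 h0 :
  d_t (fun t h => penalty t s0 h k0) t0 h0 =
  (t0 - s0) / eps + al * (INR N * (1 + t0) ^ pred N) * (2 + h0 ^ 2 + k0 ^ 2)
  + barrier_slope t0.
Proof.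
  unfold d_t, penalty, barrier, barrier_slope; apply is_derive_unique.
  auto_derive; [auto |].
  unfold Rdiv; generalize ((t0 * / ts) ^ pred m); intro; field; lra.
Qed.

Lemma penalty_d_h_u s0 k0 t0 h0 :
  d_h (fun t h => penalty t s0 h k0) t0 h0 =
  (h0 - k0) / eps + 2 * (al * (1 + t0) ^ N) * h0 - gam.
Proof.
  unfold d_h, penalty, barrier; apply is_derive_unique.
  auto_derive; [auto |]; field; lra.
Qed.

Lemma penalty_d_t_v t0 h0 s0 k0 :
  d_t (fun s k => - penalty t0 s h0 k) s0 k0 = (t0 - s0) / eps - barrier_slope s0.
Proof.
  unfold d_t, penalty, barrier, barrier_slope; apply is_derive_unique.
  auto_derive; [auto |].
  unfold Rdiv; generalize ((s0 * / ts) ^ pred m); intro; field; lra.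
Qed.

Lemma penalty_d_h_v t0 h0 s0 k0 :
  d_h (fun s k => - penalty t0 s h0 k) s0 k0 =
  (h0 - k0) / eps - 2 * (al * (1 + t0) ^ N) * k0 + gam.
Proof.
  unfold d_h, penalty, barrier; apply is_derive_unique.
  auto_derive; [auto |]; field; lra.
Qed.

Definition quad_margin (x : R) : R := (L + 1) * x - al * x ^ 2.

Lemma quad_margin_le x : quad_margin x <= W.
Proof.
  unfold quad_margin, W.
  assert (0 <= al * (x - (L + 1) / (2 * al)) ^ 2) by (apply Rmult_le_pos; [lra | apply pow2_ge_0]).
  replace ((L + 1) ^ 2 / (4 * al))
    with ((L + 1) * x - al * x ^ 2 + al * (x - (L + 1) / (2 * al)) ^ 2) by (field; lra).
  lra.
Qed.

Lemma quad_margin_far x : K <= x -> quad_margin x <= - Rabs (Cu - Cv + W - M).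
Proof.
  intros Hx; unfold quad_margin.
  pose proof (Rabs_pos (Cu - Cv + W - M)).
  assert (al * K <= al * x) by (apply Rmult_le_compat_l; lra).
  assert (x * (L + 1 - al * x) <= x * (- Rabs (Cu - Cv + W - M)))
    by (apply Rmult_le_compat_l; lra).
  nra.
Qed.

Lemma penalty_ge_margin t s h k : 0 <= t -> 0 <= s -> 0 <= h -> 0 <= k ->
  al * (h ^ 2 + k ^ 2) - (h + k) + barrier t + barrier s <= penalty t s h k.
Proof.
  intros Ht Hs Hh Hk; unfold penalty.
  assert (0 <= (t - s) ^ 2 / (2 * eps)) by (apply Rdiv_le_0_compat; [apply pow2_ge_0 | lra]).
  assert (0 <= (h - k) ^ 2 / (2 * eps)) by (apply Rdiv_le_0_compat; [apply pow2_ge_0 | lra]).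
  assert (1 <= (1 + t) ^ N) by (apply pow_R1_Rle; lra).
  assert (al * 1 * (h ^ 2 + k ^ 2) <= al * (1 + t) ^ N * (h ^ 2 + k ^ 2)).
  { apply Rmult_le_compat_r; [nra |]; apply Rmult_le_compat_l; lra. }
  assert (gam * (h + k) <= h + k) by nra.
  nra.
Qed.

Lemma penalty_ge_dist t s h k : 0 <= t -> 0 <= s -> 0 <= h -> 0 <= k ->
  (t - s) ^ 2 / (2 * eps) + (h - k) ^ 2 / (2 * eps) - gam * (h + k) <= penalty t s h k.
Proof.
  intros Ht Hs Hh Hk; unfold penalty.
  assert (1 <= (1 + t) ^ N) by (apply pow_R1_Rle; lra).
  assert (0 <= al * (1 + t) ^ N * (2 + h ^ 2 + k ^ 2))
    by (apply Rmult_le_pos; [apply Rmult_le_pos |]; nra).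
  pose proof (barrier_nonneg t Ht); pose proof (barrier_nonneg s Hs); lra.
Qed.

Lemma Phi_le_margins t s h k : 0 <= t <= T -> 0 <= s <= T -> 0 <= h -> 0 <= k ->
  Phi t s h k <= Cu - Cv + quad_margin h + quad_margin k - barrier t - barrier s.
Proof.
  intros Ht Hs Hh Hk; unfold Phi, quad_margin.
  pose proof (HLu t h 0 ltac:(lra) Hh (Rle_refl 0)) as Hlu.
  pose proof (HLv s k 0 ltac:(lra) Hk (Rle_refl 0)) as Hlv.
  rewrite Rminus_0_r, (Rabs_right h) in Hlu by lra.
  rewrite Rminus_0_r, (Rabs_right k) in Hlv by lra.
  apply Rabs_le_between in Hlu, Hlv.
  pose proof (HCu t Ht); pose proof (HCv s Hs).
  pose proof (penalty_ge_margin t s h k ltac:(lra) ltac:(lra) Hh Hk).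
  lra.
Qed.

Lemma Phi_reference : M + 2 * th <= Phi ts ts hs hs.
Proof.
  unfold Phi, penalty, barrier.
  replace (ts / ts) with 1 by (field; lra); rewrite pow1.
  replace ((ts - ts) ^ 2 / (2 * eps)) with 0 by (field; lra).
  replace ((hs - hs) ^ 2 / (2 * eps)) with 0 by (field; lra).
  replace (al * (1 + ts) ^ N * (2 + hs ^ 2 + hs ^ 2))
    with (al * (1 + ts) ^ N * (2 + 2 * hs ^ 2)) by ring.
  assert (0 <= gam * (hs + hs)) by nra.
  lra.
Qed.

Lemma Phi_far t s h k : 0 <= t <= T -> 0 <= s <= T -> 0 <= h -> 0 <= k ->
  K <= h \/ K <= k -> Phi t s h k < M + 2 * th.
Proof.
  intros Ht Hs Hh Hk Hfar.
  pose proof (Phi_le_margins t s h k Ht Hs Hh Hk).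
  pose proof (barrier_nonneg t ltac:(lra)); pose proof (barrier_nonneg s ltac:(lra)).
  pose proof (quad_margin_le h); pose proof (quad_margin_le k).
  pose proof (Rle_abs (Cu - Cv + W - M)).
  destruct Hfar as [Hfar | Hfar]; pose proof (quad_margin_far _ Hfar); lra.
Qed.

Lemma Phi_end t s h k : 0 <= t <= T -> 0 <= s <= T -> 0 <= h -> 0 <= k ->
  t = T \/ s = T -> Phi t s h k < M + 2 * th.
Proof.
  intros Ht Hs Hh Hk Hend.
  assert (HT : barrier T = th * 2 ^ m)
    by (unfold barrier, T; replace (2 * ts / ts) with 2 by (field; lra); reflexivity).
  pose proof (Phi_le_margins t s h k Ht Hs Hh Hk).
  pose proof (barrier_nonneg t ltac:(lra)); pose proof (barrier_nonneg s ltac:(lra)).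
  pose proof (quad_margin_le h); pose proof (quad_margin_le k).
  destruct Hend; subst; lra.
Qed.

Lemma Phi_start t s h k : 0 <= t <= T -> 0 <= s <= T -> 0 <= h <= K -> 0 <= k <= K ->
  t = 0 \/ s = 0 -> Phi t s h k <= M + th.
Proof.
  intros Ht Hs Hh Hk Hstart; unfold Phi.
  pose proof (penalty_ge_dist t s h k ltac:(lra) ltac:(lra) ltac:(lra) ltac:(lra)).
  pose proof (Hinit h ltac:(lra)).
  pose proof (HLv 0 h k (Rle_refl 0) ltac:(lra) ltac:(lra)) as Hlv.
  apply Rabs_le_between in Hlv.
  pose proof (young_abs L (h - k) eps Heps).
  assert (gam * (h + k) <= 2 * gam * K) by nra.
  assert (0 <= (t - s) ^ 2 / (2 * eps)) by (apply Rdiv_le_0_compat; [apply pow2_ge_0 | lra]).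
  destruct Hstart; subst.
  - pose proof (Hlayer_v s k Hs Hk) as Hlayer; apply Rabs_le_between in Hlayer.
    replace ((0 - s) ^ 2) with (s ^ 2) in * by ring; lra.
  - pose proof (Hlayer_u t h Ht Hh) as Hlayer; apply Rabs_le_between in Hlayer.
    replace ((t - 0) ^ 2) with (t ^ 2) in * by ring; lra.
Qed.

Definition doubled_argmax (t0 s0 h0 k0 : R) : Prop :=
  (0 < t0 < T /\ 0 < s0 < T /\ 0 <= h0 /\ 0 <= k0) /\
  forall t s h k, 0 <= t <= T -> 0 <= s <= T -> 0 <= h -> 0 <= k ->
    Phi t s h k <= Phi t0 s0 h0 k0.

Lemma doubled_argmax_exists : exists t0 s0 h0 k0, doubled_argmax t0 s0 h0 k0.
Proof.
  destruct (box_argmax Phi T K ltac:(unfold T; lra) ltac:(lra)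
              (doubled_continuous_on_box u v penalty T K (proj1 Hsub) (proj1 Hsup)
                 penalty_continuous))
    as (t0 & s0 & h0 & k0 & Hbox & Hmax).
  destruct Hbox as (Ht0 & Hs0 & Hh0 & Hk0).
  assert (Hbig : M + 2 * th <= Phi t0 s0 h0 k0).
  { eapply Rle_trans; [apply Phi_reference | apply Hmax].
    repeat split; unfold T; lra. }
  exists t0, s0, h0, k0; split.
  - pose proof (Phi_end t0 s0 h0 k0 Ht0 Hs0 ltac:(lra) ltac:(lra)).
    pose proof (Phi_start t0 s0 h0 k0 Ht0 Hs0 Hh0 Hk0).
    destruct (Req_dec t0 T); [lra |]; destruct (Req_dec s0 T); [lra |].
    destruct (Req_dec t0 0); [lra |]; destruct (Req_dec s0 0); [lra |].
    repeat split; lra.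
  - intros t s h k Ht Hs Hh Hk.
    destruct (Rle_lt_dec h K); destruct (Rle_lt_dec k K);
      try (apply Hmax; repeat split; lra);
      pose proof (Phi_far t s h k Ht Hs Hh Hk); lra.
Qed.

Section AtArgmax.

Variables t0 s0 h0 k0 : R.
Hypothesis Hmax : doubled_argmax t0 s0 h0 k0.

Let A := al * (1 + t0) ^ N.
Let p := (h0 - k0) / eps.

Lemma sub_ineq_at_argmax :
  (t0 - s0) / eps + al * (INR N * (1 + t0) ^ pred N) * (2 + h0 ^ 2 + k0 ^ 2)
  + barrier_slope t0 - 2 * (p + 2 * A * h0 - gam) ^ 2 <= 0.
Proof.
  destruct Hmax as ((Ht0 & Hs0 & Hh0 & Hk0) & Hglob).
  pose proof (visc_sub_ineq u t0 h0 (fun t h => penalty t s0 h k0) Hsub (conj (proj1 Ht0) Hh0)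
                (poly2_test_fun _ (penalty_poly2_u s0 k0))) as Hvisc.
  rewrite penalty_d_t_u, penalty_d_h_u in Hvisc; apply Hvisc.
  - exists (T - t0); split; [lra |]; intros t h Ht Hh Hdist _.
    apply Rabs_lt_between in Hdist.
    pose proof (Hglob t s0 h k0 ltac:(lra) ltac:(lra) Hh Hk0); unfold Phi in *; lra.
  - intros Hz; rewrite Hz.
    assert (0 <= k0 / eps) by (apply Rdiv_le_0_compat; lra).
    replace ((0 - k0) / eps) with (- (k0 / eps)) by (field; lra); lra.
Qed.

Lemma super_ineq_at_argmax :
  (t0 - s0) / eps - barrier_slope s0 - 2 * (p - 2 * A * k0 + gam) ^ 2 >= 0.
Proof.
  destruct Hmax as ((Ht0 & Hs0 & Hh0 & Hk0) & Hglob).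
  pose proof (visc_super_ineq v s0 k0 (fun s k => - penalty t0 s h0 k) Hsup (conj (proj1 Hs0) Hk0)
                (poly2_test_fun _ (penalty_poly2_v t0 h0))) as Hvisc.
  rewrite penalty_d_t_v, penalty_d_h_v in Hvisc; apply Hvisc.
  - exists (T - s0); split; [lra |]; intros s k Hs Hk Hdist _.
    apply Rabs_lt_between in Hdist.
    pose proof (Hglob t0 s h0 k ltac:(lra) ltac:(lra) Hh0 Hk); unfold Phi in *; lra.
  - intros Hz; rewrite Hz.
    assert (0 <= h0 / eps) by (apply Rdiv_le_0_compat; lra).
    replace ((h0 - 0) / eps) with (h0 / eps) by (field; lra); lra.
Qed.

Lemma slope_bound_at_argmax : Rabs p <= 2 * (L + Rabs (A * (h0 + k0) - gam)).
Proof.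
  destruct Hmax as ((Ht0 & Hs0 & Hh0 & Hk0) & Hglob).
  apply penalized_slope_bound; [lra | lra |].
  pose proof (Hglob t0 s0 k0 k0 ltac:(lra) ltac:(lra) Hk0 Hk0) as Hcomp.
  pose proof (HLu t0 h0 k0 ltac:(lra) Hh0 Hk0) as Hlip.
  apply Rabs_le_between in Hlip.
  assert (Hdiff : penalty t0 s0 h0 k0 - penalty t0 s0 k0 k0
                  = (h0 - k0) ^ 2 / (2 * eps) + (A * (h0 + k0) - gam) * (h0 - k0))
    by (unfold penalty, A; field; lra).
  unfold Phi in Hcomp; lra.
Qed.

End AtArgmax.

Lemma doubling_contradiction : False.
Proof.
  destruct doubled_argmax_exists as (t0 & s0 & h0 & k0 & Hmax).
  pose proof (sub_ineq_at_argmax t0 s0 h0 k0 Hmax) as Hu.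
  pose proof (super_ineq_at_argmax t0 s0 h0 k0 Hmax) as Hv.
  pose proof (slope_bound_at_argmax t0 s0 h0 k0 Hmax) as Hslope.
  destruct Hmax as ((Ht0 & Hs0 & Hh0 & Hk0) & _).
  pose proof (hamiltonian_gap_bound (al * (1 + t0) ^ N) L gam ((h0 - k0) / eps) h0 k0
                Hh0 Hk0 ltac:(apply Rmult_le_pos; [lra | apply pow_le; lra]) ltac:(lra)
                Hslope) as Hgap.
  pose proof (time_weight_dominates L (1 + T) al gam (1 + t0) N ltac:(lra) ltac:(lra) Hal
                HN Hal_growth Hgam_growth) as Hgrowth.
  pose proof (barrier_slope_nonneg t0 ltac:(lra)); pose proof (barrier_slope_nonneg s0 ltac:(lra)).
  assert (HQ : 0 < 2 + h0 ^ 2 + k0 ^ 2) by nra.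
  apply Rmult_lt_compat_r with (r := 2 + h0 ^ 2 + k0 ^ 2) in Hgrowth; [| exact HQ].
  lra.
Qed.

End Doubling.

Lemma eventually_INR_ge c : eventually (fun n => c <= INR n).
Proof.
  apply (is_lim_seq_INR (fun x => c <= x)).
  exists c; intros; lra.
Qed.

Lemma eventually_scaled_pow2_gt c a : 0 < a -> eventually (fun n => c < a * 2 ^ n).
Proof.
  intros Ha; apply (is_lim_seq_geom_p 2 ltac:(lra) (fun x => c < a * x)).
  exists (c / a); intros x Hx.
  apply Rmult_lt_compat_l with (r := a) in Hx; [| exact Ha].
  replace (a * (c / a)) with c in Hx by (field; lra); exact Hx.
Qed.

Lemma lip_h_common u v : unif_lip_h u -> unif_lip_h v ->
  exists L, 1 <= L /\ lip_h u L /\ lip_h v L.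
Proof.
  intros [Lu HLu] [Lv HLv]; exists (Rmax 1 (Rmax Lu Lv)); split; [apply Rmax_l | split].
  - apply (lip_h_le u Lu _ HLu); eapply Rle_trans; [apply Rmax_l | apply Rmax_r].
  - apply (lip_h_le v Lv _ HLv); eapply Rle_trans; [apply Rmax_r | apply Rmax_r].
Qed.

Lemma exists_time_weight L ts hs th : 1 <= L -> 0 < ts -> 0 < th ->
  exists N al, 112 * L * (1 + 2 * ts) <= INR N /\ 0 < al /\
    al * (1 + 2 * ts) ^ S N <= INR N / 192 /\ al * (1 + ts) ^ N * (2 + 2 * hs ^ 2) <= th.
Proof.
  intros HL Hts Hth.
  destruct (filter_ex _ (eventually_INR_ge (112 * L * (1 + 2 * ts)))) as [N HN].
  assert (HN192 : 0 < INR N / 192).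
  { assert (0 < L * (1 + 2 * ts)) by (apply Rmult_lt_0_compat; lra); lra. }
  destruct (filter_ex _ (filter_and _ _ at_right0_pos (filter_and _ _
     (at_right0_mul_lt ((1 + 2 * ts) ^ S N) (INR N / 192) HN192)
     (at_right0_mul_lt ((1 + ts) ^ N * (2 + 2 * hs ^ 2)) th Hth))))
    as [al (Hal & Hal_growth & Hal_ref)].
  exists N, al; repeat split; lra.
Qed.

Lemma exists_radius a b c : 0 < a -> exists K, 1 <= K /\ b <= K /\ c <= a * K.
Proof.
  intros Ha; exists (Rmax (Rmax 1 b) (c / a)); repeat split.
  - eapply Rle_trans; [apply Rmax_l | apply Rmax_l].
  - eapply Rle_trans; [apply Rmax_r | apply Rmax_l].
  - replace c with (a * (c / a)) at 1 by (field; lra).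
    apply Rmult_le_compat_l; [lra | apply Rmax_r].
Qed.

Lemma excess_absurd u v L M ts hs th :
  visc_sub u -> visc_super v -> lip_h u L -> lip_h v L -> 1 <= L ->
  (forall h, 0 <= h -> u 0 h - v 0 h <= M) ->
  0 < ts -> 0 <= hs -> 0 < th -> u ts hs - v ts hs = M + 5 * th -> False.
Proof.
  intros Hsub Hsup HLu HLv HL Hinit Hts Hhs Hth Hexcess.
  assert (Hbounds : exists Cu Cv, forall t, 0 <= t <= 2 * ts -> u t 0 <= Cu /\ Cv <= v t 0).
  { destruct (boundary_slice_bound u (2 * ts) (proj1 Hsub) ltac:(lra)) as [Bu HBu].
    destruct (boundary_slice_bound v (2 * ts) (proj1 Hsup) ltac:(lra)) as [Bv HBv].
    exists Bu, (- Bv); intros t Ht.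
    pose proof (HBu t Ht) as Hu; pose proof (HBv t Ht) as Hv.
    apply Rabs_le_between in Hu, Hv; lra. }
  destruct Hbounds as (Cu & Cv & HC).
  destruct (exists_time_weight L ts hs th HL Hts Hth)
    as (N & al & HN & Hal & Hal_growth & Hal_ref).
  set (W := (L + 1) ^ 2 / (4 * al)).
  destruct (exists_radius al hs (L + 1 + Rabs (Cu - Cv + W - M)) Hal) as (K & HK1 & HKhs & HK).
  destruct (filter_ex _ (eventually_scaled_pow2_gt (Cu - Cv + 2 * W - M - 2 * th) th Hth))
    as [m Hm].
  assert (HalN : 0 < al * INR N / 4).
  { assert (0 < L * (1 + 2 * ts)) by (apply Rmult_lt_0_compat; lra).
    apply Rdiv_lt_0_compat; [apply Rmult_lt_0_compat |]; lra. }
  assert (Hth2 : 0 < th / 2) by lra; assert (Hth4 : 0 < th / 4) by lra.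
  destruct (filter_ex _ (filter_and _ _ at_right0_pos (filter_and _ _
     (at_right0_mul_lt 1 1 Rlt_0_1) (filter_and _ _
     (at_right0_mul_lt (16 * L) (al * INR N / 4) HalN)
     (at_right0_mul_lt (2 * K) (th / 2) Hth2)))))
    as [gam (Hgam & Hgam1 & Hgam_growth & Hgam_K)].
  assert (HT : 0 <= 2 * ts) by lra; assert (HK0 : 0 <= K) by lra; assert (HL0 : 0 <= L) by lra.
  destruct (filter_ex _ (filter_and _ _ at_right0_pos (filter_and _ _
     (at_right0_mul_lt (L ^ 2 / 2) (th / 4) Hth4) (filter_and _ _
     (initial_layer u L (2 * ts) K (th / 4) (proj1 Hsub) HLu HL0 HT HK0 Hth4)
     (initial_layer v L (2 * ts) K (th / 4) (proj1 Hsup) HLv HL0 HT HK0 Hth4)))))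
    as [eps (Heps & Heps_L & Hlayer_u & Hlayer_v)].
  unfold W in *.
  apply (doubling_contradiction u v L M ts hs th Hsub Hsup HLu HLv HL Hinit Hts Hhs Hth Hexcess
           N m al gam eps K Cu Cv); try assumption; try lra;
    intros t Ht; apply HC, Ht.
Qed.

Lemma comparison_with_initial_bound (u v : R -> R -> R) :
  visc_sub u -> visc_super v -> unif_lip_h u -> unif_lip_h v ->
  forall M, (forall h, 0 <= h -> u 0 h - v 0 h <= M) ->
  forall t h, 0 <= t -> 0 <= h -> u t h - v t h <= M.
Proof.
  intros Hsub Hsup Lu Lv M Hinit t h Ht Hh.
  destruct (lip_h_common u v Lu Lv) as (L & HL & HLu & HLv).
  destruct (Rle_lt_dec (u t h - v t h) M) as [Hle | Hexc]; [exact Hle | exfalso].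
  assert (Htpos : 0 < t).
  { destruct (Req_dec t 0) as [Hz | Hnz]; [subst; specialize (Hinit h Hh); lra | lra]. }
  apply (excess_absurd u v L M t h ((u t h - v t h - M) / 5) Hsub Hsup HLu HLv HL Hinit Htpos Hh);
    [lra | field].
Qed.

Theorem proposition4p2 (u v : R -> R -> R) :
  visc_sub u -> visc_super v -> unif_lip_h u -> unif_lip_h v ->
  sup_quadrant u v = sup_initial u v.
Proof.
  intros Hu Hv Lu Lv; unfold sup_quadrant, sup_initial.
  apply is_lub_Rbar_unique.
  destruct (Lub_Rbar_correct (fun x => exists h, 0 <= h /\ x = u 0 h - v 0 h)) as [Hub Hlub].
  split.
  - intros x (t & h & Ht & Hh & ->).
    destruct (Lub_Rbar (fun x => exists h, 0 <= h /\ x = u 0 h - v 0 h)) as [M | |] eqn:E;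
      simpl; auto.
    + apply (comparison_with_initial_bound u v Hu Hv Lu Lv M); auto.
      intros h' Hh'; apply (Hub (u 0 h' - v 0 h')); exists h'; split; auto.
    + apply (Hub (u 0 0 - v 0 0)); exists 0; split; [lra | auto].
  - intros b Hb; apply Hlub; intros x (h & Hh & ->).
    apply Hb; exists 0, h; repeat split; auto; lra.
Qed.
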